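(* Let $\mathcal{R}$ be a term rewrite system and let $M=(S,s_0,L,\delta,\mathit{out})$ be a set automaton constructed from $\mathcal{R}$ (as described in the context). Let $t,t'$ be ground terms, $ct,ct'$ configuration trees and $p$ a position. Then: (i) if $ct\sqsubseteq\mathit{completed}(t)$ then $\mathit{grow}(ct,s,q,t)\sqsubseteq\mathit{completed}(t)$ for all $(s,q)\in\mathit{buds}(ct)$; (ii) if $ct\sqsubseteq ct'$ then $\mathit{prune}(ct,p)\sqsubseteq\mathit{prune}(ct',p)$; (iii) $\mathit{prune}(ct,p)\sqsubseteq ct$; (iv) if $t\xrightarrow{(\ell\to r)@p}t'$ for some rule $\ell\to r\in\mathcal{R}$, then $\mathit{prune}(\mathit{completed}(t),p)=\mathit{prune}(\mathit{completed}(t'),p)$; (v) if $ct[p]$ exists then $\mathit{nodes}(\mathit{prune}(ct,p))=\mathit{nodes}(ct)\setminus\mathit{nodes}(ct[p])$.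
   Context: Terms: $\mathbb{F}$ is a finite ranked alphabet with arity map $\#$, $\mathbb{V}$ a set of variables, $\mathbb{T}(\mathbb{F},\mathbb{V})$ the terms. Positions are finite lists of positive integers; $\epsilon$ is the empty list, $p.q$ concatenation, $p\le q$ means $p$ is a prefix of $q$. $\mathcal{D}(t)$ is the set of positions of $t$, $\mathcal{E}(t)\subseteq\mathcal{D}(t)$ those holding variables, $t|_p$ the subterm at $p$, $t[u]_p$ replacement, $\mathrm{hd}(t)$ the head symbol. A TRS $\mathcal{R}$ is a finite nonempty set of rules $\ell\to r$ with $\ell$ not a variable and $\mathrm{vars}(r)\subseteq\mathrm{vars}(\ell)$; $\mathcal{L}$ is its set of left-hand sides. $t\xrightarrow{(\ell\to r)@p}t'$ means $t=u[\ell^\sigma]_p$ and $t'=u[r^\sigma]_p$ for some term $u$ and substitution $\sigma$. Set automaton construction. Let $\mathrm{sub}(\mathcal{L})$ be the set of subterms $\ell|_q$ with $\ell\in\mathcal{L}$, $q\in\mathcal{D}(\ell)\setminus\mathcal{E}(\ell)$. A match goal, written $\ell_1@p_1,\dots,\ell_n@p_n\hookrightarrow\ell@p$ ($n\ge1$), consists of a nonempty obligation $mo=\{\ell_1@p_1,\dots,\ell_n@p_n\}$ with $\ell_i\in\mathrm{sub}(\mathcal{L})$ and an announcement $\ell@p$ with $\ell\in\mathcal{L}$; $\mathrm{pos}(mo)=\{p_1,\dots,p_n\}$. States are nonempty sets of match goals; $s_0=\{\ell@\epsilon\hookrightarrow\ell@\epsilon\mid\ell\in\mathcal{L}\}$;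 $S$ is the set of states reachable from $s_0$ via $\delta$. Each state $s$ gets a fixed label $L(s)\in\mathrm{pos}(mo)$ for some goal $mo\hookrightarrow\ell@\epsilon\in s$. Let $\mathrm{reduce}(mo,f,p)=\{\ell'@q\in mo\mid q\ne p\}\cup\{\ell'|_i@p.i\mid \ell'@p\in mo,1\le i\le\#f,\ell'|_i\notin\mathbb{V}\}$. For $f\in\mathbb{F}$, $\mathrm{deriv}(s,f)$ is the union of: $\{\mathrm{reduce}(mo,f,L(s))\hookrightarrow ma\mid mo\hookrightarrow ma\in s,\ \exists\ell'.\ \ell'@L(s)\in mo\wedge\mathrm{hd}(\ell')=f,\ \mathrm{reduce}(mo,f,L(s))\neq\emptyset\}$; $\{mo\hookrightarrow ma\in s\mid L(s)\notin\mathrm{pos}(mo)\}$; and $\{\ell@L(s).i\hookrightarrow\ell@L(s).i\mid\ell\in\mathcal{L},1\le i\le\#f\}$. Two goals are directly dependent if their obligation position sets intersect; dependency is the transitive closure, an equivalence. For an equivalence class $K$ of $\mathrm{deriv}(s,f)$, $\mathrm{gcp}(K)$ is the greatest common prefix of the announcement positions of $K$, and $\mathrm{lift}(K)$ is obtained by removing the prefix $\mathrm{gcp}(K)$ from every position occurring in $K$. Then $\delta(s,f)=\{(\mathrm{lift}(K),\mathrm{gcp}(K))\mid K$ a dependency class of $\mathrm{deriv}(s,f)\}$ and $\mathit{out}(s,f)=\{(\ell\to r)@p\mid\ell\to r\in\mathcal{R},\ f(x_1,\dots,x_{\#f})@L(s)\hookrightarrow\ell@p\in s,\ x_i\in\mathbb{V}\}$.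 Configuration trees: $ct::=\mathit{bud}(s,p)\mid\mathit{node}(s,p,cts)$ with $(s,p)\in S\times$positions and $cts$ a finite, possibly empty set of configuration trees. $\mathit{buds}(ct)$ / $\mathit{nodes}(ct)$ are the sets of configurations labelling bud / node vertices of $ct$. For ground $t$: $\mathit{completed}(s,p,t)=\mathit{node}(s,p,\{\mathit{completed}(s',p.p',t)\mid(s',p')\in\delta(s,\mathrm{hd}(t|_{p.L(s)}))\})$ and $\mathit{completed}(t)=\mathit{completed}(s_0,\epsilon,t)$. $\mathit{grow}(ct,s,p,t)$: if $ct=\mathit{bud}(s,p)$ it is $\mathit{node}(s,p,\{\mathit{bud}(s',p.p')\mid(s',p')\in\delta(s,\mathrm{hd}(t|_{p.L(s)}))\})$; if $ct=\mathit{bud}(s',p')$ with $(s',p')\ne(s,p)$ it is $ct$; if $ct=\mathit{node}(s',p',cts)$ it is $\mathit{node}(s',p',\{\mathit{grow}(c,s,p,t)\mid c\in cts\})$. $\mathit{prune}(\mathit{bud}(s,p),q)=\mathit{bud}(s,p)$; $\mathit{prune}(\mathit{node}(s,p,cts),q)=\mathit{bud}(s,p)$ if $p.L(s)=q$ and $\mathit{node}(s,p,\{\mathit{prune}(c,q)\mid c\in cts\})$ otherwise. $ct[p]$ denotes the subtree of $ct$ whose root configuration $(s,q)$ satisfies $q.L(s)=p$. The fragment relation $\sqsubseteq$ is the smallest relation with $\mathit{bud}(s,p)\sqsubseteq\mathit{bud}(s,p)$, $\mathit{bud}(s,p)\sqsubseteq\mathit{node}(s,p,cts)$, and $\mathit{node}(s,p,cts)\sqsubseteq\mathit{node}(s,p,cts')$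 iff there is a bijection $\varphi:cts\to cts'$ with $c\sqsubseteq\varphi(c)$ for all $c\in cts$.
   Formalization: Part (v) holds only for configuration trees ct with $ct\sqsubseteq\mathit{completed}(t)$. The paper assumes this as well. *)

From HB Require Import structures.
From mathcomp Require Import all_boot finmap.
From Stdlib Require List Permutation.
Set Implicit Arguments. Unset Strict Implicit. Unset Printing Implicit Defensive.

Local Open Scope fset_scope.

Section Terms.
Variables (F : finType) (V : countType).

Inductive term := Var of V | App of F & seq term.

Fixpoint term_enc (t : term) : GenTree.tree (F + V) :=
  match t with
  | Var x => GenTree.Leaf (inr x)
  | App f ts => GenTree.Node 0 (GenTree.Leaf (inl f) :: map term_enc ts)
  end.

Fixpoint term_dec (g : GenTree.tree (F + V)) : option term :=
  match g with
  | GenTree.Leaf (inr x) => Some (Var x)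
  | GenTree.Node _ (GenTree.Leaf (inl f) :: gs) => Some (App f (pmap term_dec gs))
  | _ => None
  end.

Lemma term_encK : forall t, term_dec (term_enc t) = Some t.
Proof.
fix IH 1; case=> [x|f ts] //=; congr (Some (App f _)).
elim: ts => //= u us IHus; by rewrite IH /= IHus.
Qed.

HB.instance Definition _ := Countable.copy term (pcan_type term_encK).

(* Positions: finite lists of positive integers; [::] is epsilon,
   p ++ q is concatenation p.q. *)
Definition pos := seq nat.

Fixpoint subterm (t : term) (p : pos) : option term :=
  match p with
  | [::] => Some t
  | i :: q =>
      match t with
      | Var _ => None
      | App _ ts => if 0 < i then obind (subterm^~ q) (onth ts i.-1) else None
      end
  end.

Definition in_dom (t : term) (p : pos) : bool := subterm t p != None.

(* t[u]_p (meaningful for p \in D(t)) *)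
Fixpoint replace (t : term) (p : pos) (u : term) : term :=
  match p with
  | [::] => u
  | i :: q =>
      match t with
      | Var x => Var x
      | App f ts =>
          if (0 < i) && (i <= size ts)
          then App f (set_nth t ts i.-1 (replace (nth t ts i.-1) q u))
          else t
      end
  end.

Definition is_var (t : term) : bool := if t is Var _ then true else false.

Definition head_sym (t : term) : option F :=
  if t is App f _ then Some f else None.

Fixpoint vars (t : term) : seq V :=
  match t with Var x => [:: x] | App _ ts => flatten (map vars ts) end.

Fixpoint subst (sigma : V -> term) (t : term) : term :=
  match t with Var x => sigma x | App f ts => App f (map (subst sigma) ts) end.

Fixpoint tsize (t : term) : nat :=
  match t with Var _ => 1 | App _ ts => (sumn (map tsize ts)).+1 end.

Variable ar : F -> nat.

Fixpoint wf_term (t : term) : bool :=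
  match t with
  | Var _ => true
  | App f ts => (size ts == ar f) && all wf_term ts
  end.

Fixpoint no_vars (t : term) : bool :=
  match t with Var _ => false | App _ ts => all no_vars ts end.

Definition ground_term (t : term) : bool := wf_term t && no_vars t.

Definition rw_step (l r : term) (p : pos) (t t' : term) : Prop :=
  exists (u : term) (sigma : V -> term),
    [/\ in_dom u p, t = replace u p (subst sigma l) & t' = replace u p (subst sigma r)].

Definition trs_ok (R : seq (term * term)) : Prop :=
  R != [::] /\
  forall l r, (l, r) \in R ->
    [/\ ~~ is_var l, {subset vars r <= vars l}, wf_term l & wf_term r].

Definition mentry := (term * pos)%type.
Definition goal := ({fset mentry} * mentry)%type.        (* mo |-> l@p *)
Definition state := {fset goal}.

Variable R : seq (term * term).

Definition Lhs : {fset term} := [fset rl.1 | rl in R].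

Definition s0 : state := [fset ([fset (l, [::])], (l, [::])) | l in Lhs].

Definition pos_mo (mo : {fset mentry}) : {fset pos} := [fset e.2 | e in mo].

Definition reduce (mo : {fset mentry}) (f : F) (p : pos) : {fset mentry} :=
  [fset e in mo | e.2 != p] `|`
  [fset x | x in
     flatten [seq pmap (fun i => match subterm e.1 [:: i] with
                                 | Some u => if is_var u then None
                                             else Some (u, p ++ [:: i])
                                 | None => None end)
                       (iota 1 (ar f))
             | e <- mo & e.2 == p]].

Variable lab : state -> pos.

Definition fresh_goals (s : state) (f : F) : {fset goal} :=
  [fset x | x in
     flatten [seq [seq ([fset (l, lab s ++ [:: i])], (l, lab s ++ [:: i]))
                       | i <- iota 1 (ar f)] | l <- Lhs]].

Definition deriv (s : state) (f : F) : {fset goal} :=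
  [fset (reduce g.1 f (lab s), g.2) | g in s &
      has (fun e => (e.2 == lab s) && (head_sym e.1 == Some f)) g.1
      && (reduce g.1 f (lab s) != fset0)]
  `|` [fset g in s | lab s \notin pos_mo g.1]
  `|` fresh_goals s f.

Definition direct_dep (g h : goal) : bool := pos_mo g.1 `&` pos_mo h.1 != fset0.

(* dependency class of g in D: closure of {g} under direct dependency
   inside D (|D| iterations suffice) *)
Definition dep_class (D : {fset goal}) (g : goal) : {fset goal} :=
  iter #|` D| (fun X => X `|` [fset h in D | has (fun k => direct_dep k h) X])
       [fset g].

Definition dep_classes (D : {fset goal}) : {fset {fset goal}} :=
  [fset dep_class D g | g in D].

Fixpoint lcp (p q : pos) : pos :=
  match p, q with
  | i :: p', j :: q' => if i == j then i :: lcp p' q' else [::]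
  | _, _ => [::]
  end.

Definition gcp (K : {fset goal}) : pos :=
  match [seq g.2.2 | g <- K] with
  | [::] => [::]
  | x :: xs => foldl lcp x xs
  end.

Definition lift (K : {fset goal}) : state :=
  let n := size (gcp K) in
  [fset ([fset (e.1, drop n e.2) | e in g.1], (g.2.1, drop n g.2.2)) | g : goal in K].

Definition delta (s : state) (f : F) : {fset (state * pos)} :=
  [fset (lift K, gcp K) | K in dep_classes (deriv s f)].

Inductive reach : state -> Prop :=
| reach0 : reach s0
| reachS s f s' p' : reach s -> (s', p') \in delta s f -> reach s'.

Definition label_ok : Prop :=
  forall s, reach s -> exists2 g, g \in s & (g.2.2 == [::]) && (lab s \in pos_mo g.1).

Definition config := (state * pos)%type.

(* children are a finite collection, represented by a list *)
Inductive ctree := Bud of state & pos | Node of state & pos & seq ctree.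

Definition hd_at (t : term) (q : pos) : option F := obind head_sym (subterm t q).

Definition succs (t : term) (s : state) (p : pos) : seq config :=
  match hd_at t (p ++ lab s) with
  | Some f => [seq (c.1, p ++ c.2) | c <- delta s f]
  | None => [::]
  end.

Fixpoint completed_fuel (n : nat) (t : term) (s : state) (p : pos) : ctree :=
  match n with
  | 0 => Node s p [::]
  | n.+1 => Node s p [seq completed_fuel n t c.1 c.2 | c <- succs t s p]
  end.

(* completed(t) = completed(s0, eps, t); every branch reads pairwise distinct
   positions of t, so tsize t + 1 levels of recursion suffice. *)
Definition completed (t : term) : ctree := completed_fuel (tsize t).+1 t s0 [::].

Fixpoint grow (ct : ctree) (s : state) (p : pos) (t : term) : ctree :=
  match ct with
  | Bud s' p' =>
      if (s', p') == (s, p)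
      then Node s p [seq Bud c.1 c.2 | c <- succs t s p]
      else ct
  | Node s' p' cts => Node s' p' [seq grow c s p t | c <- cts]
  end.

Fixpoint prune (ct : ctree) (q : pos) : ctree :=
  match ct with
  | Bud s p => Bud s p
  | Node s p cts =>
      if p ++ lab s == q then Bud s p else Node s p [seq prune c q | c <- cts]
  end.

Fixpoint buds (ct : ctree) : seq config :=
  match ct with
  | Bud s p => [:: (s, p)]
  | Node _ _ cts => flatten [seq buds c | c <- cts]
  end.

Fixpoint nodes (ct : ctree) : seq config :=
  match ct with
  | Bud _ _ => [::]
  | Node s p cts => (s, p) :: flatten [seq nodes c | c <- cts]
  end.

(* fragment relation: bijection between children = permutation of the list *)
Inductive frag : ctree -> ctree -> Prop :=
| frag_bb s p : frag (Bud s p) (Bud s p)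
| frag_bn s p cts : frag (Bud s p) (Node s p cts)
| frag_nn s p cts cts' cts'' :
    Permutation.Permutation cts' cts'' -> List.Forall2 frag cts cts'' ->
    frag (Node s p cts) (Node s p cts').

Inductive subtree : ctree -> ctree -> Prop :=
| subtree_refl c : subtree c c
| subtree_child c s p cts d : List.In d cts -> subtree c d -> subtree c (Node s p cts).

Definition root_read (ct : ctree) : pos :=
  match ct with Bud s q | Node s q _ => q ++ lab s end.

Definition conf_ok (ct : ctree) : Prop :=
  forall c, c \in nodes ct ++ buds ct -> reach c.1.

End Terms.

(* A configuration (s, q) reads the position q.L(s).  For a reachable state s the
   obligation positions of s form an antichain for the prefix order containing L(s),
   and a successor of s only trades L(s) for its children; two successors claiming
   overlapping positions would share a dependency class, hence coincide.  Therefore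
   every position read in the subtree of (s, q) in completed(t) extends q.o for an
   obligation position o of s, distinct subtrees read disjoint sets, and completed(t)
   reads no position twice, which gives (v) for each of its fragments.  Along a branch
   the positions read are thus distinct positions of t, so the fuel in the definition
   of completed(t) never runs out, which gives (i).  A rewrite at p only changes heads
   below p, and a configuration whose obligations are not strictly below p either
   reads p, where pruning cuts, or reads the same head in t and t', which gives (iv). *)

From Pilot Require Import Defs.
From HB Require Import structures.
From mathcomp Require Import all_boot finmap.
From Stdlib Require List Permutation.
Set Implicit Arguments. Unset Strict Implicit. Unset Printing Implicit Defensive.
Local Open Scope fset_scope.

Section Prefix.
Variable T : eqType.
Implicit Types a b x : seq T.

Lemma prefix_cat2l c a b : prefix (c ++ a) (c ++ b) = prefix a b.
Proof. by rewrite prefix_catr // eqxx. Qed.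

Lemma prefix_cat_drop a b : prefix a b -> a ++ drop (size a) b = b.
Proof. by move=> /prefixP[w ->]; rewrite drop_size_cat. Qed.

Lemma prefix_size_eq a b : prefix a b -> size b <= size a -> a = b.
Proof. by rewrite prefixE => /eqP Ea Hb; rewrite -Ea take_oversize. Qed.

Lemma prefix_total a b x : prefix a x -> prefix b x -> prefix a b || prefix b a.
Proof.
wlog le_ab : a b / size a <= size b => [Hwlog|].
  by case: (leqP (size a) (size b)) => [|/ltnW] /Hwlog H /H Ha /Ha; rewrite // orbC.
rewrite !prefixE => /eqP Ea /eqP Eb; apply/orP; left.
by rewrite -Eb take_takel // Ea.
Qed.

Lemma prefix_cat1 a b (i : T) : prefix a (b ++ [:: i]) -> a = b ++ [:: i] \/ prefix a b.
Proof.
move=> Ha; case: (leqP (size a) (size b)) => Hs.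
  right; case/orP: (prefix_total Ha (prefix_prefix b [:: i])) => // Hba.
  by rewrite -(prefix_size_eq Hba Hs) prefix_refl.
by left; apply: prefix_size_eq Ha _; rewrite size_cat addn1.
Qed.

End Prefix.

Section Lists.
Variables (A B : Type) (P Q : A -> B -> Prop).

Lemma Forall2_map2 (C : Type) (f : C -> A) (g : C -> B) (l : seq C) :
  (forall x, List.In x l -> P (f x) (g x)) -> List.Forall2 P (map f l) (map g l).
Proof. by elim: l => [|x l IH] H; constructor; auto using List.in_eq, List.in_cons. Qed.

Lemma Forall2_mapl (f : A -> A) l1 l2 :
  (forall x y, List.In x l1 -> List.In y l2 -> P x y -> Q (f x) y) ->
  List.Forall2 P l1 l2 -> List.Forall2 Q (map f l1) l2.
Proof.
move=> H HP; elim: HP H => [|x y l l' Pxy _ IH] H /=; constructor.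
  by apply: H; [left | left |].
by apply: IH => a b Ha Hb; apply: H; right.
Qed.

Lemma In_map_mem (T : eqType) (f : T -> B) (s : seq T) y :
  List.In y (map f s) -> exists2 x, x \in s & y = f x.
Proof.
elim: s => [|x s IH] //= [<-|/IH [z zs ->]]; first by exists x; rewrite ?mem_head.
by exists z; rewrite // inE zs orbT.
Qed.

Lemma flatten_mapP (T : eqType) (G : A -> seq T) (l : seq A) y :
  reflect (exists2 e, List.In e l & y \in G e) (y \in flatten (map G l)).
Proof.
elim: l => [|d l IH] /=; first by right; case.
rewrite mem_cat; apply: (iffP orP) => [[yd|/IH [e el ye]]|[e [<-|el] ye]].
- by exists d; first left.
- by exists e; first right.
- by left.
- by right; apply/IH; exists e.
Qed.

End Lists.

Lemma Forall2_map (A : Type) (P Q : A -> A -> Prop) (f : A -> A) l1 l2 :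
  (forall x y, P x y -> Q (f x) (f y)) ->
  List.Forall2 P l1 l2 -> List.Forall2 Q (map f l1) (map f l2).
Proof. by move=> H; elim=> [|x y l l' Pxy _ IH] /=; constructor; auto. Qed.

Lemma count_leq_uniq (T : eqType) (s1 s2 : seq T) :
  (forall x, count_mem x s1 <= count_mem x s2) -> uniq s2 -> uniq s1.
Proof.
move=> le12 U2; apply: count_mem_uniq => x; have := le12 x.
rewrite (count_uniq_mem _ U2); case: (boolP (x \in s1)) => [x_s1|/count_memPn -> //].
have : 0 < count_mem x s1 by rewrite -has_count has_pred1.
by case: (count_mem x s1) => [|[]] //; case: (x \in s2).
Qed.

Lemma uniq_flatten_map (T U : eqType) (G : T -> seq U) (l : seq T) : uniq l ->
  {in l, forall c, uniq (G c)} ->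
  {in l &, forall c1 c2 x, x \in G c1 -> x \in G c2 -> c1 = c2} ->
  uniq (flatten (map G l)).
Proof.
elim: l => [|c l IH] //= /andP[cNl Ul] UG disj.
rewrite cat_uniq UG ?mem_head //= IH //; first last.
- by move=> c1 c2 c1l c2l; apply: disj; rewrite inE ?c1l ?c2l orbT.
- by move=> c1 c1l; apply: UG; rewrite inE c1l orbT.
rewrite andbT; apply/hasPn => x /flattenP [_ /mapP [c2 c2l ->] xc2]; apply/negP => xc.
have c2cl : c2 \in c :: l by rewrite inE c2l orbT.
by move: cNl; rewrite (disj c c2 (mem_head _ _) c2cl x xc xc2) c2l.
Qed.

Section Positions.
Variables (F : finType) (V : countType).
Notation term := (term F V).

Fixpoint term_nested_ind (P : term -> Prop) (HV : forall x, P (Var F x))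
  (HA : forall f ts, (forall u, List.In u ts -> P u) -> P (App f ts)) t : P t :=
  match t with
  | Var x => HV x
  | App f ts => HA f ts
     ((fix all_in (l : seq term) : forall u, List.In u l -> P u :=
        match l with
        | [::] => fun u H => False_ind _ H
        | d :: l' => fun u H => match H with
                     | or_introl E => eq_ind d P (term_nested_ind HV HA d) u E
                     | or_intror H' => all_in l' u H' end
        end) ts)
  end.

Fixpoint dom_from (dom : term -> seq pos) (i : nat) (ts : seq term) : seq pos :=
  if ts is u :: us then map (cons i) (dom u) ++ dom_from dom i.+1 us else [::].

Fixpoint dom (t : term) : seq pos :=
  if t is App _ ts then [::] :: dom_from dom 1 ts else [:: [::]].

Lemma size_dom (t : term) : size (dom t) = Defs.tsize t.
Proof.
elim/term_nested_ind: t => [x|f ts IH] //=; congr S.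
elim: ts 1 IH => [|u us IHus] i IH //=.
by rewrite size_cat size_map IH ?IHus //; [move=> v Hv; apply: IH; right | left].
Qed.

Lemma mem_dom_from i ts k u a :
  onth ts k = Some u -> a \in dom u -> (i + k)%N :: a \in dom_from dom i ts.
Proof.
elim: ts i k => [|v vs IH] i [|k] //=.
- by case=> -> Ha; rewrite addn0 mem_cat map_f.
- by move=> Hk Ha; rewrite mem_cat addnS -addSn IH ?orbT.
Qed.

Lemma subterm_dom t a w : subterm t a = Some w -> a \in dom t.
Proof.
elim: a t => [|[|j] a IH] [x|f ts] //=; rewrite ?mem_head //.
case E: (onth ts j) => [u|] //= Ha.
by rewrite in_cons (mem_dom_from 1 E (IH _ Ha)) orbT.
Qed.

Lemma uniq_hd_at_size (t : term) (A : seq pos) :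
  uniq A -> {in A, forall a, hd_at t a != None} -> size A <= Defs.tsize t.
Proof.
move=> uA HA; rewrite -size_dom; apply: uniq_leq_size => // a /HA.
by rewrite /hd_at; case E: (subterm t a) => [w|] // _; apply: subterm_dom E.
Qed.

Lemma onth_set_nth (T : Type) x0 (s : seq T) i y j : i < size s ->
  onth (set_nth x0 s i y) j = if j == i then Some y else onth s j.
Proof. by elim: s i j => [|z s IH] [|i] [|j] //= Hi; apply: IH. Qed.

Lemma hd_at_replace (u : term) p v x : in_dom u p -> ~~ prefix p x ->
  hd_at (replace u p v) x = hd_at u x.
Proof.
elim: p u x => [|i p IH] [y|f ts] x //=; rewrite ?prefix0s // /in_dom /=.
case: i => [|i] //=; case E: (onth ts i) => [w|] //= Hw.
have Hi : i < size ts by rewrite -onthTE E.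
rewrite Hi; case: x => [|[|j] x] //=; rewrite /hd_at /= onth_set_nth //.
by case: (j =P i) => [->|_] //=; rewrite eqxx E /= (onth_nth _ _ _ _ E) => /IH; apply.
Qed.

End Positions.

Section DependencyClasses.
Variables (F : finType) (V : countType).
Notation goal := (goal F V).
Implicit Types (D X Y : {fset goal}) (x h k : goal).

Definition dep_step D X := X `|` [fset h in D | has (fun k => direct_dep k h) X].

Lemma direct_depC h k : direct_dep h k = direct_dep k h.
Proof. by rewrite /direct_dep fsetIC. Qed.

Lemma dep_classE D x : dep_class D x = iter #|`D| (dep_step D) [fset x].
Proof. by []. Qed.

Lemma dep_step_sub D X : X `<=` D -> dep_step D X `<=` D.
Proof.
move=> XD; apply/fsubsetP => h; rewrite in_fsetU => /orP[/(fsubsetP XD)//|].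
by rewrite inE => /andP[].
Qed.

Lemma dep_class_sub D x : x \in D -> dep_class D x `<=` D.
Proof.
move=> xD; rewrite dep_classE; elim: #|`D| => [|j IH] /=; last exact: dep_step_sub.
by rewrite fsub1set.
Qed.

(* Each non-stationary iteration adds a goal of D, so #|D| iterations reach the fixpoint. *)
Lemma dep_class_fix D x : x \in D -> dep_step D (dep_class D x) = dep_class D x.
Proof.
move=> xD; have [//|] : dep_step D (dep_class D x) = dep_class D x \/
    #|`D| < #|`dep_class D x|.
  rewrite dep_classE; elim: #|`D| => [|j IH]; first by right; rewrite /= cardfs1.
  rewrite iterS; set X := iter j _ _.
  have [E|neX] := eqVneq (dep_step D X) X; first by left; rewrite !E.
  right; case: IH => [E|]; first by rewrite E eqxx in neX.
  move/leq_ltn_trans; apply; apply: fproper_ltn_card.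
  by rewrite fproperEneq fsubsetUl eq_sym neX.
by rewrite ltnNge fsubset_leq_card ?dep_class_sub.
Qed.

Lemma dep_class_closed D x h k : x \in D -> h \in dep_class D x -> k \in D ->
  direct_dep h k -> k \in dep_class D x.
Proof.
move=> xD hx kD hk; rewrite -(dep_class_fix xD) in_fsetU !inE kD /=.
by apply/orP; right; apply/hasP; exists h.
Qed.

Lemma dep_class_min D x Y : x \in Y ->
  (forall h k, h \in Y -> k \in D -> direct_dep h k -> k \in Y) -> dep_class D x `<=` Y.
Proof.
move=> xY closedY; rewrite dep_classE; elim: #|`D| => [|j IH] /=; first by rewrite fsub1set.
apply/fsubsetP => k; rewrite in_fsetU => /orP[/(fsubsetP IH)//|].
by rewrite inE => /andP[kD /hasP[h /(fsubsetP IH) hY hk]]; apply: closedY hY kD hk.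
Qed.

Lemma dep_class_meet D x1 x2 h : x1 \in D -> x2 \in D ->
  h \in dep_class D x1 -> h \in dep_class D x2 -> dep_class D x1 `<=` dep_class D x2.
Proof.
move=> x1D x2D h1 h2.
have x1_2 : x1 \in dep_class D x2.
  apply/negPn/negP => x1N2.
  have : dep_class D x1 `<=` D `\` dep_class D x2.
    apply: dep_class_min => [|h' k]; first by rewrite in_fsetD x1N2.
    rewrite !in_fsetD => /andP[h'N2 h'D] kD hk; rewrite kD andbT.
    apply: contra h'N2 => k2; apply: dep_class_closed k2 h'D _ => //.
    by rewrite direct_depC.
  by move/fsubsetP/(_ h h1); rewrite in_fsetD h2.
by apply: dep_class_min x1_2 _ => h' k h'2 kD; apply: dep_class_closed h'2 kD.
Qed.

Lemma dep_class_eq D x1 x2 h1 h2 : x1 \in D -> x2 \in D ->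
  h1 \in dep_class D x1 -> h2 \in dep_class D x2 -> direct_dep h1 h2 ->
  dep_class D x1 = dep_class D x2.
Proof.
move=> x1D x2D h1x h2x hh.
have h2D : h2 \in D by apply: (fsubsetP (dep_class_sub x2D)).
have h2_1 := dep_class_closed x1D h1x h2D hh.
by apply/eqP; rewrite eqEfsubset (dep_class_meet x1D x2D h2_1) // (dep_class_meet x2D x1D h2x).
Qed.

End DependencyClasses.

Section Automaton.
Variables (F : finType) (V : countType) (ar : F -> nat)
  (R : seq (term F V * term F V)) (lab : state F V -> pos).
Notation goal := (goal F V).
Notation state := (state F V).
Notation reach := (reach ar R lab).
Notation deriv := (deriv ar R lab).
Notation delta := (delta ar R lab).
Implicit Types (K : {fset goal}) (s : state) (o : pos).

Lemma lcp_prefixl p q : prefix (lcp p q) p.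
Proof.
elim: p q => [|i p IH] [|j q] //=; rewrite ?prefix0s //.
by case: (i =P j) => _; rewrite /= ?eqxx ?IH.
Qed.

Lemma lcp_prefixr p q : prefix (lcp p q) q.
Proof.
elim: p q => [|i p IH] [|j q] //=; rewrite ?prefix0s //.
by case: (i =P j) => [<-|_]; rewrite /= ?eqxx ?IH.
Qed.

Lemma foldl_lcp_prefix x xs y : y \in x :: xs -> prefix (foldl lcp x xs) y.
Proof.
elim: xs x y => [|z zs IH] x y /=; first by rewrite inE => /eqP ->; apply: prefix_refl.
have lcp_xz := IH (lcp x z) _ (mem_head _ _).
rewrite !inE => /or3P[/eqP->|/eqP->|y_zs].
- exact: prefix_trans lcp_xz (lcp_prefixl x z).
- exact: prefix_trans lcp_xz (lcp_prefixr x z).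
- by apply: IH; rewrite inE y_zs orbT.
Qed.

Lemma gcp_prefix K h : h \in K -> prefix (gcp K) h.2.2.
Proof.
rewrite /gcp => hK; have : h.2.2 \in [seq g.2.2 | g <- K] by apply: map_f.
by case: [seq g.2.2 | g <- K] => [|x xs] //; apply: foldl_lcp_prefix.
Qed.

Lemma pos_moP (mo : {fset mentry F V}) o :
  reflect (exists2 e, e \in mo & o = e.2) (o \in pos_mo mo).
Proof. exact: imfsetP. Qed.

Lemma mem_pos_mo (mo : {fset mentry F V}) e : e \in mo -> e.2 \in pos_mo mo.
Proof. by move=> emo; apply/pos_moP; exists e. Qed.

Definition obl_pos K o := exists2 h, h \in K & o \in pos_mo h.1.

Lemma s0_obl o : obl_pos (s0 R) o -> o = [::].
Proof. by case=> _ /imfsetP[l _ ->] /pos_moP[e]; rewrite inE => /eqP -> ->. Qed.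

(* The obligation positions of deriv s f: those of s other than L(s), and the children of L(s). *)
Definition step_obl s o := (obl_pos s o /\ o <> lab s) \/ exists i, o = lab s ++ [:: i].

Definition anchored K := forall h, h \in K -> forall o, o \in pos_mo h.1 -> prefix h.2.2 o.

Lemma pos_mo_reduce (mo : {fset mentry F V}) f L o : o \in pos_mo (reduce ar mo f L) ->
  (o \in pos_mo mo /\ o != L) \/ (L \in pos_mo mo /\ exists i, o = L ++ [:: i]).
Proof.
case/pos_moP => e; rewrite /reduce in_fsetU => /orP[|].
  by rewrite !inE => /andP[He Hne] ->; left; split=> //; apply: mem_pos_mo.
rewrite in_fset => /flattenP[l /mapP[e0]]; rewrite mem_filter => /andP[/eqP E0 He0] ->.
rewrite mem_pmap => /mapP[i _]; case: (subterm e0.1 [:: i]) => [u|] //.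
case: (is_var u) => //; case=> -> ->; right; split; last by exists i.
by rewrite -E0; apply: mem_pos_mo.
Qed.

Lemma mem_deriv s f h : h \in deriv s f ->
  [\/ exists2 g, g \in s & h = (reduce ar g.1 f (lab s), g.2) /\ lab s \in pos_mo g.1,
      h \in s /\ lab s \notin pos_mo h.1
    | exists l i, h = ([fset (l, lab s ++ [:: i])], (l, lab s ++ [:: i]))].
Proof.
rewrite /deriv !in_fsetU => /orP[/orP[|]|].
- case/imfsetP=> g /=; rewrite inE => /andP[gs /andP[/hasP[e eg /andP[/eqP Ee _]] _]] ->.
  by apply: Or31; exists g => //; split; rewrite // -Ee mem_pos_mo.
- by rewrite inE => /andP[hs hN]; apply: Or32.
- rewrite /fresh_goals in_fset => /allpairsP[[l i] /= [_ _ ->]].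
  by apply: Or33; exists l, i.
Qed.

Lemma deriv_step_obl s f h o : h \in deriv s f -> o \in pos_mo h.1 -> step_obl s o.
Proof.
case/mem_deriv => [[g gs [-> _]]|[hs hN]|[l [i ->]]] /=.
- case/pos_mo_reduce => [[og /eqP oN]|[_ [i ->]]]; last by right; exists i.
  by left; split=> //; exists g.
- move=> oh; left; split; first by exists h.
  by move=> Eo; rewrite -Eo oh in hN.
- by case/pos_moP=> e; rewrite inE => /eqP -> ->; right; exists i.
Qed.

Lemma deriv_anchored s f : anchored s -> anchored (deriv s f).
Proof.
move=> anc h /mem_deriv [[g gs [-> _]]|[hs _]|[l [i ->]]] o /=.
- case/pos_mo_reduce => [[og _]|[Lg [i ->]]]; first exact: anc.
  exact: prefix_catl (anc _ gs _ Lg).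
- exact: anc.
- by case/pos_moP=> e; rewrite inE => /eqP -> ->; apply: prefix_refl.
Qed.

Lemma lift_obl K h' o' : anchored K -> h' \in Defs.lift K -> o' \in pos_mo h'.1 ->
  exists2 h, h \in K & gcp K ++ o' \in pos_mo h.1.
Proof.
move=> anc /imfsetP[g /= gK ->] /pos_moP[_ /imfsetP[e /= eg ->] ->].
exists g => //; rewrite prefix_cat_drop ?mem_pos_mo //.
exact: prefix_trans (gcp_prefix gK) (anc _ gK _ (mem_pos_mo eg)).
Qed.

Lemma lift_anchored K : anchored K -> anchored (Defs.lift K).
Proof.
move=> anc _ /imfsetP[g /= gK ->] _ /pos_moP[_ /imfsetP[e /= eg ->] ->].
have ge := anc _ gK _ (mem_pos_mo eg); have Kg := gcp_prefix gK.
by rewrite -(prefix_cat2l (gcp K)) !prefix_cat_drop // (prefix_trans Kg).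
Qed.

Lemma mem_delta s f s' g : (s', g) \in delta s f ->
  exists2 x, x \in deriv s f &
    s' = Defs.lift (dep_class (deriv s f) x) /\ g = gcp (dep_class (deriv s f) x).
Proof. by case/imfsetP => K /imfsetP [x xD ->] [-> ->]; exists x. Qed.

Lemma reach_anchored s : reach s -> anchored s.
Proof.
elim => [|{}s f s' g _ anc /mem_delta [x xD [-> _]]].
  by move=> _ /imfsetP [l _ ->] o _; apply: prefix0s.
apply: lift_anchored => h /(fsubsetP (dep_class_sub xD)).
exact: deriv_anchored anc h.
Qed.

Lemma delta_obl s f s' g o' : reach s -> (s', g) \in delta s f -> obl_pos s' o' ->
  exists x h, [/\ x \in deriv s f, h \in dep_class (deriv s f) x,
     s' = Defs.lift (dep_class (deriv s f) x),
     g = gcp (dep_class (deriv s f) x) & g ++ o' \in pos_mo h.1].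
Proof.
move=> /reach_anchored anc /mem_delta [x xD [Es Eg]] [h' h's' o'h'].
have ancK : anchored (dep_class (deriv s f) x).
  by move=> h /(fsubsetP (dep_class_sub xD)); apply: deriv_anchored anc h.
rewrite Es in h's'; have [h hK oh] := lift_obl ancK h's' o'h'.
by exists x, h; split; rewrite // Eg.
Qed.

Lemma delta_step_obl s f s' g o' : reach s -> (s', g) \in delta s f ->
  obl_pos s' o' -> step_obl s (g ++ o').
Proof.
move=> rs sg o's'; have [x [h [xD hK _ _ oh]]] := delta_obl rs sg o's'.
exact: deriv_step_obl (fsubsetP (dep_class_sub xD) _ hK) oh.
Qed.

Definition obl_antichain s :=
  forall o1 o2, obl_pos s o1 -> obl_pos s o2 -> prefix o1 o2 -> o1 = o2.

Lemma step_obl_antichain s o1 o2 : obl_antichain s -> obl_pos s (lab s) ->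
  step_obl s o1 -> step_obl s o2 -> prefix o1 o2 -> o1 = o2.
Proof.
move=> anti Ls [[o1s o1N]|[i ->]] [[o2s o2N]|[j ->]] o12.
- exact: anti.
- by case: (prefix_cat1 o12) => // /(anti _ _ o1s Ls).
- by case: o2N; symmetry; apply: anti (prefix_trans (prefix_prefix _ _) o12).
- by apply: prefix_size_eq o12 _; rewrite !size_cat.
Qed.

(* Overlapping obligations make the underlying goals directly dependent, hence put them
   in the same dependency class, i.e. the same successor. *)
Lemma delta_disjoint s f s1 g1 s2 g2 o1 o2 : reach s ->
  (s1, g1) \in delta s f -> (s2, g2) \in delta s f -> obl_pos s1 o1 -> obl_pos s2 o2 ->
  g1 ++ o1 = g2 ++ o2 -> (s1, g1) = (s2, g2).
Proof.
move=> rs sg1 sg2 o1s o2s.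
have [x1 [h1 [x1D h1K -> -> o1h]]] := delta_obl rs sg1 o1s.
have [x2 [h2 [x2D h2K -> -> o2h]]] := delta_obl rs sg2 o2s.
move=> Eo; suff -> : dep_class (deriv s f) x1 = dep_class (deriv s f) x2 by [].
apply: dep_class_eq x1D x2D h1K h2K _.
by apply/fset0Pn; exists (gcp (dep_class (deriv s f) x1) ++ o1); rewrite in_fsetI o1h Eo o2h.
Qed.

Hypothesis HL : label_ok ar R lab.

Lemma lab_obl s : reach s -> obl_pos s (lab s).
Proof. by move/HL => [g gs /andP[_ Lg]]; exists g. Qed.

Lemma reach_antichain s : reach s -> obl_antichain s.
Proof.
elim => [|{}s f s' g rs anti sg] o1 o2; first by move=> /s0_obl -> /s0_obl ->.
move=> o1s' o2s'; rewrite -(prefix_cat2l g) => o12.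
have := step_obl_antichain anti (lab_obl rs) (delta_step_obl rs sg o1s')
  (delta_step_obl rs sg o2s') o12.
by move/(congr1 (drop (size g))); rewrite !drop_size_cat.
Qed.

Lemma step_obl_prefix_lab s o : reach s -> step_obl s o -> ~~ prefix o (lab s).
Proof.
move=> rs [[os oN]|[i ->]]; last by apply/negP => /size_prefix; rewrite size_cat addn1 ltnn.
by apply/negP => /(reach_antichain rs os (lab_obl rs)).
Qed.

Lemma step_obl_total s o1 o2 : reach s -> step_obl s o1 -> step_obl s o2 ->
  prefix o1 o2 || prefix o2 o1 -> o1 = o2.
Proof.
move=> rs o1s o2s; have anti := step_obl_antichain (reach_antichain rs) (lab_obl rs).
by case/orP => [/(anti _ _ o1s o2s) | /(anti _ _ o2s o1s)].
Qed.

End Automaton.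

Section ConfigTrees.
Variables (F : finType) (V : countType) (lab : state F V -> pos).
Notation ctree := (ctree F V).

Fixpoint ctree_nested_ind (P : ctree -> Prop) (HB : forall s p, P (Bud s p))
  (HN : forall s p cts, (forall c, List.In c cts -> P c) -> P (Node s p cts))
  (c : ctree) : P c :=
  match c with
  | Bud s p => HB s p
  | Node s p cts => HN s p cts
     ((fix all_in (l : seq ctree) : forall c, List.In c l -> P c :=
        match l with
        | [::] => fun c H => False_ind _ H
        | d :: l' => fun c H => match H with
                     | or_introl E => eq_ind d P (ctree_nested_ind HB HN d) c E
                     | or_intror H' => all_in l' c H' end
        end) cts)
  end.

Fixpoint frag_nested_ind (P : ctree -> ctree -> Prop)
  (Hbb : forall s p, P (Bud s p) (Bud s p))
  (Hbn : forall s p cts, P (Bud s p) (Node s p cts))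
  (Hnn : forall s p cts cts' cts'', Permutation.Permutation cts' cts'' ->
      List.Forall2 P cts cts'' -> P (Node s p cts) (Node s p cts'))
  c c' (H : frag c c') {struct H} : P c c' :=
  match H with
  | frag_bb s p => Hbb s p
  | frag_bn s p cts => Hbn s p cts
  | frag_nn s p cts cts' cts'' Hp HF => Hnn s p cts cts' cts'' Hp
      ((fix all2 l1 l2 (HF : List.Forall2 (@frag F V) l1 l2) : List.Forall2 P l1 l2 :=
         match HF with
         | List.Forall2_nil => List.Forall2_nil _
         | List.Forall2_cons x y l1 l2 Hxy HF' =>
             List.Forall2_cons x y (frag_nested_ind Hbb Hbn Hnn Hxy) (all2 _ _ HF')
         end) cts cts'' HF)
  end.

Lemma frag_node s p cts cts' :
  List.Forall2 (@frag F V) cts cts' -> frag (Node s p cts) (Node s p cts').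
Proof. exact: frag_nn (Permutation.Permutation_refl _). Qed.

Lemma prune_frag ct p : frag (prune lab ct p) ct.
Proof.
elim/ctree_nested_ind: ct => [s q|s q cts IH] /=; first exact: frag_bb.
case: ifP => _; first exact: frag_bn.
by apply/frag_node; rewrite -{2}(map_id cts); apply: Forall2_map2.
Qed.

Lemma prune_frag_mono ct ct' p : frag ct ct' -> frag (prune lab ct p) (prune lab ct' p).
Proof.
elim/frag_nested_ind => [s q|s q cts|s q cts cts' cts'' Hperm HF] /=.
- exact: frag_bb.
- by case: ifP => _; [apply: frag_bb | apply: frag_bn].
- case: ifP => _; first exact: frag_bb.
  apply: (@frag_nn _ _ s q _ _ (map (prune lab ^~ p) cts''));
    first exact: Permutation.Permutation_map.
  exact: Forall2_map HF.
Qed.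

Definition root (ct : ctree) : config F V := match ct with Bud s p | Node s p _ => (s, p) end.

Lemma frag_root c c' : frag c c' -> root c = root c'.
Proof. by case. Qed.

Lemma frag_node_inv s p cts c' : frag (Node s p cts) c' ->
  exists2 cts'', Permutation.Permutation (if c' is Node _ _ cts' then cts' else [::]) cts''
    & List.Forall2 (@frag F V) cts cts''.
Proof. by move=> H; inversion H; exists cts''. Qed.

Fixpoint reads (ct : ctree) : seq pos :=
  match ct with
  | Bud s p => [:: p ++ lab s]
  | Node s p cts => (p ++ lab s) :: flatten (map reads cts)
  end.

Lemma perm_count_reads x (l1 l2 : seq ctree) : Permutation.Permutation l1 l2 ->
  count_mem x (flatten (map reads l1)) = count_mem x (flatten (map reads l2)).
Proof.
elim=> [|a l l' _ IH|a b l|l l' l'' _ IH1 _ IH2] //=; rewrite ?count_cat.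
- by rewrite IH.
- by rewrite addnCA.
- by rewrite IH1.
Qed.

Lemma frag_count_reads c c' : frag c c' ->
  forall x, count_mem x (reads c) <= count_mem x (reads c').
Proof.
elim/frag_nested_ind => [s q|s q cts|s q cts cts' cts'' Hperm HF] x //=.
  by rewrite addn0 leq_addr.
rewrite leq_add2l (perm_count_reads x Hperm).
by elim: HF {Hperm} => [|a b l l' ab _ IH] //=; rewrite !count_cat leq_add.
Qed.

Lemma frag_uniq_reads c c' : frag c c' -> uniq (reads c') -> uniq (reads c).
Proof. by move/frag_count_reads; apply: count_leq_uniq. Qed.

Lemma mem_reads_nodes ct x : x \in nodes ct -> x.2 ++ lab x.1 \in reads ct.
Proof.
elim/ctree_nested_ind: ct => [s q|s q cts IH] //=.
rewrite !inE => /predU1P[->|/flatten_mapP [e ects xe]]; first by rewrite eqxx.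
by apply/orP; right; apply/flatten_mapP; exists e; last exact: IH.
Qed.

Lemma subtree_reads c d : subtree c d -> {subset reads c <= reads d}.
Proof.
elim=> [{}c y //|{}c s q cts {}d dcts _ IH y yc] /=.
by rewrite in_cons; apply/orP; right; apply/flatten_mapP; exists d; last exact: IH.
Qed.

Lemma root_read_reads c : root_read lab c \in reads c.
Proof. by case: c => *; rewrite /= mem_head. Qed.

Lemma prune_id ct p : p \notin reads ct -> prune lab ct p = ct.
Proof.
elim/ctree_nested_ind: ct => [//|s q cts IH] /=.
rewrite inE negb_or eq_sym => /andP[/negbTE -> pN]; congr Node.
elim: cts IH pN => [|d l IHl] //= IH; rewrite mem_cat negb_or => /andP[pd pl].
by rewrite IH ?IHl //; [move=> e el; apply: IH; right | left].
Qed.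

Lemma map_prune_id (l : seq ctree) p : p \notin flatten (map reads l) ->
  map (prune lab ^~ p) l = l.
Proof.
by elim: l => [|d l IH] //=; rewrite mem_cat negb_or => /andP[pd pl]; rewrite prune_id ?IH.
Qed.

Lemma nodes_prune_subtree ct c p : uniq (reads ct) -> subtree c ct -> root_read lab c = p ->
  forall x, (x \in nodes (prune lab ct p)) = (x \in nodes ct) && (x \notin nodes c).
Proof.
move=> + Hsub; elim: Hsub => [{}c|{}c s q cts d dcts Hsub IH] Uct Hr x.
  by case: c Hr {Uct} => [s q|s q cts] //= ->; rewrite eqxx andbN.
have p_d : p \in reads d by rewrite -Hr (subtree_reads Hsub) ?root_read_reads.
move: Uct; have [l1 [l2 ->]] : exists l1 l2, cts = l1 ++ d :: l2.
  by have [l1 [l2 E]] := List.in_split _ _ dcts; exists l1, l2.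
rewrite /= !map_cat !flatten_cat /=.
set r := q ++ lab s; set R1 := flatten (map reads l1); set R2 := flatten (map reads l2).
rewrite !cat_uniq => /andP[rN /and3P[_ /hasPn dR2NR1 /and3P[Ud /hasPn R2Nd _]]].
have fresh y : y \in reads d -> [/\ y != r, y \notin R1 & y \notin R2].
  move=> yd; split.
  - by apply: contraNneq rN => <-; rewrite !mem_cat yd orbT.
  - by apply: dR2NR1; rewrite mem_cat yd.
  - by apply: contraTN yd => /R2Nd.
have [rp pR1 pR2] := fresh _ p_d.
rewrite eq_sym (negbTE rp) !map_prune_id //= map_cat flatten_cat /= !in_cons !mem_cat IH //.
have [xc|] := boolP (x \in nodes c); rewrite ?andbT ?andbF //.
have [xr xR1 xR2] := fresh _ (subtree_reads Hsub (mem_reads_nodes xc)).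
have nodes_reads y l :
    y \in flatten (map (@nodes F V) l) -> y.2 ++ lab y.1 \in flatten (map reads l).
  by case/flatten_mapP => e el ye; apply/flatten_mapP; exists e; last exact: mem_reads_nodes.
rewrite (contraNF (@nodes_reads x l1) xR1) (contraNF (@nodes_reads x l2) xR2).
by rewrite !orbF; apply: contraNF xr => /eqP ->.
Qed.

End ConfigTrees.

Section CompletedTrees.
Variables (F : finType) (V : countType) (ar : F -> nat)
  (R : seq (term F V * term F V)) (lab : state F V -> pos).
Hypothesis HL : label_ok ar R lab.
Notation term := (term F V).
Notation state := (state F V).
Notation reach := (reach ar R lab).
Notation delta := (delta ar R lab).
Notation succs := (succs ar R lab).
Notation cf := (completed_fuel ar R lab).
Implicit Types (t : term) (s : state) (q : pos) (A : seq pos).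

Lemma mem_succs t s q c : c \in succs t s q ->
  exists f g, [/\ hd_at t (q ++ lab s) = Some f, (c.1, g) \in delta s f & c.2 = q ++ g].
Proof.
rewrite /succs; case: (hd_at t (q ++ lab s)) => [f|] //.
by case/mapP => [[s' g]] sg ->; exists f, g.
Qed.

Lemma frag_bud_completed_fuel n t s q : frag (Bud s q) (cf n t s q).
Proof. by case: n => *; apply: frag_bn. Qed.

(* [A] lists the positions read on the way from the root to (s,q): they are distinct
   positions of t, none lies below a pending obligation, and together with the fuel
   they account for every position of t. *)
Definition fuel_ok t n A s q :=
  [/\ reach s, uniq A, {in A, forall a, hd_at t a != None},
      Defs.tsize t <= n + size A
    & forall o a, obl_pos s o -> a \in A -> ~~ prefix (q ++ o) a].

Lemma fuel_ok_fresh t n A s q : fuel_ok t n A s q -> q ++ lab s \notin A.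
Proof.
case=> rs _ _ _ below; apply/negP => rA.
by have/negP := below _ _ (lab_obl HL rs) rA; apply; apply: prefix_refl.
Qed.

Lemma fuel_ok0 t A s q : fuel_ok t 0 A s q -> succs t s q = [::].
Proof.
move=> ok; have [_ uA inA sz _] := ok; rewrite /succs.
case E: (hd_at t (q ++ lab s)) => [f|] //.
have : size ((q ++ lab s) :: A) <= Defs.tsize t.
  apply: uniq_hd_at_size; first by rewrite /= (fuel_ok_fresh ok).
  by move=> a; rewrite inE => /predU1P[->|/inA]; rewrite ?E.
by rewrite /= ltnNge sz.
Qed.

Lemma fuel_ok_child t n A s q c : fuel_ok t n A s q -> c \in succs t s q ->
  fuel_ok t n.-1 ((q ++ lab s) :: A) c.1 c.2.
Proof.
case: n => [|n] ok; first by rewrite (fuel_ok0 ok).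
have [rs uA inA sz below] := ok.
case/mem_succs => f [g [Ehd sg ->]]; split.
- exact: reachS rs sg.
- by rewrite /= (fuel_ok_fresh ok).
- by move=> a; rewrite inE => /predU1P[->|/inA]; rewrite ?Ehd.
- by rewrite /= addnS.
move=> o' a o's'; have step := delta_step_obl rs sg o's'.
rewrite -catA inE => /predU1P[->|aA].
  by rewrite prefix_cat2l; exact: (step_obl_prefix_lab HL rs step).
case: step => [[os _]|[i ->]]; first exact: below.
by apply: contra (below _ _ (lab_obl HL rs) aA); rewrite catA; apply: catl_prefix.
Qed.

Lemma completed_fuel_unfold t n A s q : fuel_ok t n A s q ->
  cf n t s q = Node s q [seq cf n.-1 t c.1 c.2 | c <- succs t s q].
Proof. by case: n => [|n] // /fuel_ok0 ->. Qed.

Lemma fuel_ok_completed t : fuel_ok t (Defs.tsize t).+1 [::] (s0 R) [::].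
Proof. by split=> //; [apply: reach0 | rewrite addn0]. Qed.

Lemma grow_frag_completed_fuel t s' q' ct n A s q : fuel_ok t n A s q ->
  frag ct (cf n t s q) -> frag (grow ar R lab ct s' q' t) (cf n t s q).
Proof.
elim/ctree_nested_ind: ct n A s q => [s1 q1|s1 q1 cts IH] n A s q ok;
  rewrite (completed_fuel_unfold ok) => ct_cf; have /= [-> ->] := frag_root ct_cf.
- rewrite /=; case: eqP => [[<- <-]|_]; last exact: frag_bn.
  by apply/frag_node/Forall2_map2 => c _; apply: frag_bud_completed_fuel.
- have [cts'' perm_cts ctsF] := frag_node_inv ct_cf.
  apply: (@frag_nn _ _ s q _ _ cts'' perm_cts).
  apply: Forall2_mapl ctsF => x y xcts ycts.
  have [c cs ->] := In_map_mem
    (Permutation.Permutation_in _ (Permutation.Permutation_sym perm_cts) ycts).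
  exact: IH x xcts _ _ _ _ (fuel_ok_child ok cs).
Qed.

Definition obl_not_below p s q := forall o, obl_pos s o -> prefix p (q ++ o) -> q ++ o = p.

Lemma obl_not_below_child p s q f s' g : reach s -> obl_not_below p s q ->
  q ++ lab s != p -> (s', g) \in delta s f -> obl_not_below p s' (q ++ g).
Proof.
move=> rs nb rN sg o' o's'; rewrite -catA.
case: (delta_step_obl rs sg o's') => [[os _]|[i ->]]; first exact: nb.
rewrite catA => /prefix_cat1 [//|pr].
by rewrite (nb _ (lab_obl HL rs) pr) eqxx in rN.
Qed.

Lemma obl_not_below_s0 p : obl_not_below p (s0 R) [::].
Proof. by move=> o /s0_obl -> /=; case: p. Qed.

Lemma succs_off_prefix t t' p s q :
  (forall x, ~~ prefix p x -> hd_at t x = hd_at t' x) -> reach s ->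
  obl_not_below p s q -> q ++ lab s != p -> succs t s q = succs t' s q.
Proof.
move=> same_hd rs nb rN; rewrite /succs same_hd //.
by apply: contra rN => pr; rewrite (nb _ (lab_obl HL rs) pr).
Qed.

Lemma prune_completed_fuel t t' p :
  (forall x, ~~ prefix p x -> hd_at t x = hd_at t' x) ->
  forall n n' A s q, fuel_ok t n A s q -> fuel_ok t' n' A s q -> obl_not_below p s q ->
  prune lab (cf n t s q) p = prune lab (cf n' t' s q) p.
Proof.
move=> same_hd; elim=> [|n IH] n' A s q ok ok' nb;
  rewrite (completed_fuel_unfold ok) (completed_fuel_unfold ok') /=;
  case: eqP => // /eqP rN; have [rs _ _ _ _] := ok;
  rewrite -(succs_off_prefix same_hd rs nb rN).
  by rewrite (fuel_ok0 ok).
rewrite -!map_comp; congr Node; apply/eq_in_map => c cs /=.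
have [f [g [_ sg Ec]]] := mem_succs cs.
have cs' : c \in succs t' s q by rewrite -(succs_off_prefix same_hd rs nb rN).
have nbc : obl_not_below p c.1 c.2 by rewrite Ec; apply: obl_not_below_child sg.
exact: IH (fuel_ok_child ok cs) (fuel_ok_child ok' cs') nbc.
Qed.

Lemma reads_completed_fuel_below t n s q x : reach s -> x \in reads lab (cf n t s q) ->
  exists2 o, obl_pos s o & prefix (q ++ o) x.
Proof.
have root_below s1 q1 : reach s1 -> exists2 o, obl_pos s1 o & prefix (q1 ++ o) (q1 ++ lab s1).
  by move=> rs1; exists (lab s1); [apply: (lab_obl HL rs1) | apply: prefix_refl].
elim: n s q => [|n IH] s q rs /=; rewrite in_cons.
  by rewrite in_nil orbF => /eqP ->; apply: root_below.
case/predU1P => [->|]; first exact: root_below.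
rewrite -map_comp => /flattenP[_ /mapP[c cs ->] xc].
have [f [g [_ sg Ec]]] := mem_succs cs.
have [o' o's' pr] := IH _ _ (reachS rs sg) xc.
rewrite Ec -catA in pr.
case: (delta_step_obl rs sg o's') => [[os _]|[i Ei]]; first by exists (g ++ o').
exists (lab s); first exact: (lab_obl HL rs).
by move: pr; rewrite Ei catA; apply: catl_prefix.
Qed.

Lemma uniq_reads_completed_fuel t n s q : reach s -> uniq (reads lab (cf n t s q)).
Proof.
elim: n s q => [|n IH] s q rs //=; rewrite -map_comp.
have child_below c x : c \in succs t s q -> x \in reads lab (cf n t c.1 c.2) ->
    exists f g o', [/\ hd_at t (q ++ lab s) = Some f, (c.1, g) \in delta s f,
                       c.2 = q ++ g, obl_pos c.1 o' & prefix (q ++ (g ++ o')) x].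
  move=> cs xc; have [f [g [hd sg Ec]]] := mem_succs cs.
  have [o' o's' pr] := reads_completed_fuel_below (reachS rs sg) xc.
  by exists f, g, o'; split; rewrite // catA -Ec.
apply/andP; split.
  apply/negP => /flattenP[_ /mapP[c cs ->]] /= rc.
  have [f [g [o' [_ sg _ o's' pr]]]] := child_below _ _ cs rc.
  have := step_obl_prefix_lab HL rs (delta_step_obl rs sg o's').
  by rewrite -(prefix_cat2l q) pr.
apply: uniq_flatten_map => [|c cs|c1 c2 c1s c2s x xc1 xc2] /=.
- rewrite /succs; case: (hd_at t (q ++ lab s)) => [f|] //.
  rewrite map_inj_uniq ?fset_uniq // => -[s1 g1] [s2 g2] /= [-> Eg].
  by move/(congr1 (drop (size q))): Eg; rewrite !drop_size_cat // => ->.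
- by have [f [g [_ sg _]]] := mem_succs cs; apply: IH (reachS rs sg).
have [f1 [g1 [o1 [hd1 sg1 Ec1 o1s pr1]]]] := child_below _ _ c1s xc1.
have [f2 [g2 [o2 [hd2 sg2 Ec2 o2s pr2]]]] := child_below _ _ c2s xc2.
move: sg2; rewrite hd1 in hd2; case: hd2 => <- sg2.
have Eo : g1 ++ o1 = g2 ++ o2.
  apply: (step_obl_total HL rs (delta_step_obl rs sg1 o1s) (delta_step_obl rs sg2 o2s)).
  by have := prefix_total pr1 pr2; rewrite !prefix_cat2l.
move: (delta_disjoint rs sg1 sg2 o1s o2s Eo) Ec1 Ec2.
by case: c1 c2 {c1s c2s xc1 xc2 o1s o2s sg1 sg2 pr1 pr2} => [s1 q1] [s2 q2] /= [-> ->] -> ->.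
Qed.

End CompletedTrees.

Theorem lemma1 (F : finType) (ar : F -> nat) (V : countType)
  (R : seq (term F V * term F V)) (lab : state F V -> pos)
  (HR : trs_ok ar R) (HL : label_ok ar R lab)
  (t t' : term F V) (ct ct' : ctree F V) (p : pos)
  (Ht : ground_term ar t) (Ht' : ground_term ar t')
  (Hct : conf_ok ar R lab ct) (Hct' : conf_ok ar R lab ct')
  (Hp : all (fun i => 0 < i) p) :
  [/\
   (* (i) *)
   frag ct (completed ar R lab t) ->
     forall s q, (s, q) \in buds ct ->
       frag (grow ar R lab ct s q t) (completed ar R lab t),
   (* (ii) *)
   frag ct ct' -> frag (prune lab ct p) (prune lab ct' p),
   (* (iii) *)
   frag (prune lab ct p) ct,
   (* (iv) *)
   (exists l r, (l, r) \in R /\ rw_step l r p t t') ->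
     prune lab (completed ar R lab t) p = prune lab (completed ar R lab t') p
 & (* (v): ct[p] = a subtree c of ct whose root (s,q) has q.L(s) = p *)
   frag ct (completed ar R lab t) ->
     forall c, subtree c ct -> root_read lab c = p ->
       forall x, (x \in nodes (prune lab ct p)) = (x \in nodes ct) && (x \notin nodes c)].
Proof.
have ok t0 := fuel_ok_completed ar R lab t0.
split.
- by move=> ct_t s q _; apply: grow_frag_completed_fuel (ok t) ct_t.
- exact: prune_frag_mono.
- exact: prune_frag.
- move=> [l [r [_ [u [sigma [up -> ->]]]]]].
  apply: (prune_completed_fuel HL _ (ok _) (ok _)).
    by move=> x px; rewrite !hd_at_replace.
  exact: obl_not_below_s0.
- move=> ct_t c c_ct cp x; apply: nodes_prune_subtree c_ct cp x.
  exact: frag_uniq_reads ct_t (uniq_reads_completed_fuel HL _ _ _ (reach0 _ _ _)).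
Qed.
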